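(* Fix an integer $q\ge 2$ and let $a_1/b_1<a_2/b_2<\dots<a_m/b_m=1$ be the elements (in lowest terms, with positive integers $a_k,b_k$) of the set of reduced fractions $a/b\le 1$ with $2\le a+b\le q$. Let $n=4\sum_{k=1}^m b_k$ and define binary sequences of length $n$ $$S=0^{b_1+a_1}1^{b_1-a_1}0^{b_2+a_2}1^{b_2-a_2}\cdots 0^{b_m+a_m}1^{b_m-a_m}\;0^{b_m-a_m}1^{b_m+a_m}\cdots 0^{b_1-a_1}1^{b_1+a_1},\qquad T=1^{n/2}0^{n/2}.$$ For $1\le r\le m$ let $j(r)=\sum_{k=r}^m 2b_k$ and $j(m+1)=0$. For $1\le r\le m+1$ let $\Gamma_r$ be the alignment of $S$ and $T$ in which the first $j(r)$ occurrences of $0$ in $S$ are aligned with spaces, the remaining $n-j(r)$ characters of $S$ are aligned in order, without spaces, with the first $n-j(r)$ characters of $T$, and the last $j(r)$ characters of $T$ are aligned with spaces (so $\Gamma_{m+1}$ is the alignment with no spaces). Then for every alignment $\Gamma$ of $S$ and $T$ and every $\beta\ge 0$, there is some $r\in\{1,\dots,m+1\}$ such that $\mathrm{score}_{(0,\beta)}(\Gamma_r)\ge \mathrm{score}_{(0,\beta)}(\Gamma)$.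
   Context: An alignment of sequences $S,T$ is a pair $(S',T')$ of equal-length strings obtained by inserting space symbols ''$-$'' into $S$ and $T$, with no position having spaces in both. Its summary is $(w,x,y)$, with $w$ the number of positions with equal characters (matches), $x$ the number of positions with different characters (mismatches), and $y$ the number of positions with a space. For parameters $(\alpha,\beta)$, $\mathrm{score}_{(\alpha,\beta)}(\Gamma)=w-\alpha x-\beta y$; in particular $\mathrm{score}_{(0,\beta)}(\Gamma)=w-\beta y$. *)

From mathcomp Require Import all_boot all_order all_algebra.
From mathcomp Require Import reals.
Set Implicit Arguments. Unset Strict Implicit. Unset Printing Implicit Defensive.
Import Order.TTheory GRing.Theory Num.Theory.

(* A column of an alignment: [None] denotes the space symbol "-". *)
Definition column := (option bool * option bool)%type.

(* An alignment of S and T, given as the list of its columns (S'_i, T'_i):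
   erasing spaces from the top row gives S, from the bottom row gives T,
   and no column has spaces in both rows. *)
Definition is_alignment (S T : seq bool) (al : seq column) : Prop :=
  [/\ pmap id (map fst al) = S, pmap id (map snd al) = T &
      all (fun c : column => (c.1 != None) || (c.2 != None)) al].

Definition is_match (c : column) : bool :=
  match c with (Some x, Some y) => x == y | _ => false end.
Definition is_mismatch (c : column) : bool :=
  match c with (Some x, Some y) => x != y | _ => false end.
Definition is_space (c : column) : bool := (c.1 == None) || (c.2 == None).

Definition nmatch (al : seq column) := count is_match al.
Definition nmismatch (al : seq column) := count is_mismatch al.
Definition nspace (al : seq column) := count is_space al.

Local Open Scope ring_scope.
Definition score {R : realType} (alpha beta : R) (al : seq column) : R :=
  (nmatch al)%:R - alpha * (nmismatch al)%:R - beta * (nspace al)%:R.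
Local Close Scope ring_scope.

Definition frac_lt (p p' : nat * nat) : bool := p.1 * p'.2 < p'.1 * p.2.

Definition Sseq (fr : seq (nat * nat)) : seq bool :=
  flatten [seq nseq (p.2 + p.1) false ++ nseq (p.2 - p.1) true | p <- fr] ++
  flatten [seq nseq (p.2 - p.1) false ++ nseq (p.2 + p.1) true | p <- rev fr].

Definition nlen (fr : seq (nat * nat)) : nat := 4 * sumn (map snd fr).

Definition Tseq (fr : seq (nat * nat)) : seq bool :=
  nseq (nlen fr %/ 2) true ++ nseq (nlen fr %/ 2) false.

Fixpoint build (j : nat) (s t : seq bool) : seq column :=
  match s with
  | [::] => map (fun c => (None, Some c)) t
  | c :: s' =>
      if (~~ c) && (0 < j) then (Some c, None) :: build j.-1 s' t
      else match t with
           | x :: t' => (Some c, Some x) :: build j s' t'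
           | [::] => (Some c, None) :: build j s' [::]
           end
  end.

(* j for the (0-indexed) r, r = 0..m, corresponding to the paper's r+1:
   j = sum_{k=r+1}^m 2 b_k (so r = m gives 0). *)
Definition jidx (fr : seq (nat * nat)) (r : nat) : nat :=
  2 * sumn (map snd (drop r fr)).

Definition Gamma (fr : seq (nat * nat)) (r : nat) : seq column :=
  build (jidx fr r) (Sseq fr) (Tseq fr).

From mathcomp Require Import all_boot all_order all_algebra.
From mathcomp Require Import reals.
From mathcomp Require Import zify lra.
Import Order.TTheory GRing.Theory Num.Theory.

Set Implicit Arguments.
Unset Strict Implicit.
Unset Printing Implicit Defensive.

(* Cut an alignment of S with T = 1^N 0^N at the column where T switches from
   ones to zeros, and let p be the number of characters of S left of the cut.
   The matches are at most the agreements of S with 1^p 0^(2N-p), and each side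
   of the cut needs at least |p - N| spaces.  Since S is its second half H,
   reversed and complemented, followed by H, this bound equals
   (zeros of H) + (agreements of H with 1^t 0^(N-t)) - 2 beta t with t = |p - N|,
   and Gamma_r attains it exactly at t = j(r).  H is a concatenation of blocks
   0^(b-a) 1^(b+a); within a block the agreements are |t - (b-a)| plus a
   constant, so the bound is convex there and is maximal at a block boundary,
   i.e. at some j(r).  Neither the order nor the coprimality of the fractions
   plays a role, only a <= b. *)

Definition step_match (X : seq bool) (t : nat) : nat :=
  count id (take t X) + count negb (drop t X).

Lemma step_match_catr B X t :
  step_match (B ++ X) (size B + t) = count id B + step_match X t.
Proof.
by rewrite /step_match take_cat drop_cat ltnNge leq_addr /= addKn count_cat addnA.
Qed.

Lemma step_match_catl B X t : t <= size B ->
  step_match (B ++ X) t = step_match B t + count negb X.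
Proof.
move=> tB; rewrite /step_match takel_cat // drop_cat.
case: ltnP => [_|Bt]; first by rewrite count_cat addnA.
have -> : t = size B by apply/eqP; rewrite eqn_leq tB.
by rewrite subnn drop0 drop_size take_size addn0.
Qed.

Lemma step_match_block c d t : t <= c + d ->
  step_match (nseq c false ++ nseq d true) t = `|t - c|.
Proof.
move=> tcd; case: (leqP t c) => tc.
  rewrite step_match_catl ?size_nseq // /step_match take_nseq // drop_nseq.
  by rewrite !count_nseq /=; lia.
rewrite -[t in step_match _ t](subnKC (ltnW tc)) -[c in c + _](size_nseq c false).
rewrite step_match_catr.
rewrite /step_match take_nseq ?drop_nseq ?count_nseq /=; lia.
Qed.

Lemma step_match_rev_negb X t : t <= size X ->
  step_match (rev (map negb X)) t = step_match X (size X - t).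
Proof.
move=> tX; rewrite /step_match take_rev drop_rev size_map !count_rev.
rewrite -map_take -map_drop !count_map addnC.
by congr (_ + _); apply: eq_count => -[].
Qed.

Definition mirror (X : seq bool) : seq bool := rev (map negb X) ++ X.

Lemma size_mirror X : size (mirror X) = 2 * size X.
Proof. by rewrite size_cat size_rev size_map; lia. Qed.

Lemma count_id_negb (X : seq bool) : count id X + count negb X = size X.
Proof. exact: count_predC. Qed.

Lemma step_match_mirror X p :
  step_match (mirror X) p = count negb X + step_match X `|p - size X|.
Proof.
have size_rX : size (rev (map negb X)) = size X by rewrite size_rev size_map.
case: (leqP p (size X)) => pX.
  rewrite step_match_catl ?size_rX // step_match_rev_negb // addnC.
  by congr (_ + step_match _ _); lia.
rewrite -[p in step_match _ p](subnKC (ltnW pX)) -[n in n + _]size_rX.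
rewrite step_match_catr count_rev count_map.
by congr (_ + step_match _ _); lia.
Qed.

Definition block (p : nat * nat) : seq bool :=
  nseq (p.2 - p.1) false ++ nseq (p.2 + p.1) true.

Definition blocks (L : seq (nat * nat)) : seq bool := flatten (map block L).

Lemma blocks_cons p L : blocks (p :: L) = block p ++ blocks L.
Proof. by []. Qed.

Lemma Sseq_mirror fr : Sseq fr = mirror (blocks (rev fr)).
Proof.
rewrite /Sseq /mirror /blocks; congr (_ ++ _).
elim: fr => [|p fr IH] //=.
rewrite rev_cons map_rcons -cats1 flatten_cat map_cat rev_cat /= cats0 -IH.
by rewrite /block map_cat !map_nseq rev_cat !rev_nseq.
Qed.

Lemma size_blocks L : all (fun p => p.1 <= p.2) L ->
  size (blocks L) = 2 * sumn (map snd L).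
Proof.
elim: L => [|[a b] L IH] //= /andP[ab /IH sizeL].
by rewrite size_cat sizeL size_cat !size_nseq /=; lia.
Qed.

Lemma half_nlen fr : all (fun p => p.1 <= p.2) fr ->
  nlen fr %/ 2 = size (blocks (rev fr)).
Proof.
move=> fr_le; rewrite size_blocks ?all_rev // map_rev sumn_rev /nlen.
by rewrite -(mulnA 2 2) mulKn.
Qed.

Arguments nmatch : simpl never.
Arguments nspace : simpl never.

Lemma nmatch_cons c X : nmatch (c :: X) = is_match c + nmatch X.
Proof. by []. Qed.

Lemma nspace_cons c X : nspace (c :: X) = is_space c + nspace X.
Proof. by []. Qed.

Lemma exists_take_count (T : Type) (P : pred T) s k : k <= count P s ->
  exists i, count P (take i s) = k.
Proof.
elim: s k => [|x s IH] [|k] //= le_k; try by exists 0.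
have [i count_i] := IH (k.+1 - P x) ltac:(lia).
by exists i.+1; rewrite /= count_i; lia.
Qed.

Lemma nmatch_cat X Y : nmatch (X ++ Y) = nmatch X + nmatch Y.
Proof. exact: count_cat. Qed.

Lemma nspace_cat X Y : nspace (X ++ Y) = nspace X + nspace Y.
Proof. exact: count_cat. Qed.

Lemma nmatch_le_count_fst (b : bool) X : all (pred1 b) (pmap id (map snd X)) ->
  nmatch X <= count (pred1 b) (pmap id (map fst X)).
Proof.
elim: X => [|[[x|] [y|]] X IH] //=; rewrite nmatch_cons /=.
- by case/andP=> /eqP-> /IH; rewrite leq_add2l.
- by move/IH/leq_trans; apply; rewrite leq_addl.
- by case/andP=> _ /IH.
Qed.

Lemma dist_size_le_nspace X :
  `|size (pmap id (map fst X)) - size (pmap id (map snd X))| <= nspace X.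
Proof. by elim: X => [|[[x|] [y|]] X IH] //=; rewrite nspace_cons /=; lia. Qed.

Lemma alignment_step_bound S N M al :
  is_alignment S (nseq N true ++ nseq M false) al ->
  exists p, [/\ p <= size S, nmatch al <= step_match S p &
                `|p - N| + `|size S - p - M| <= nspace al].
Proof.
case=> alS alT _; pose P (c : column) := isSome c.2.
have sizeT X : size (pmap id (map snd X)) = count P X by rewrite size_pmap count_map.
(* the cut: [take i al] covers exactly the N ones of T *)
have [i countN] : exists i, count P (take i al) = N.
  by apply: exists_take_count; rewrite -sizeT alT size_cat size_nseq leq_addr.
have /andP[/eqP T1 /eqP T2] :
    (pmap id (map snd (take i al)) == nseq N true) &&
    (pmap id (map snd (drop i al)) == nseq M false).
  by rewrite -eqseq_cat ?sizeT ?size_nseq // -pmap_cat -map_cat cat_take_drop alT.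
set S1 := pmap id (map fst (take i al)); set S2 := pmap id (map fst (drop i al)).
have S12 : S = S1 ++ S2 by rewrite -alS -pmap_cat -map_cat cat_take_drop.
exists (size S1); split.
- by rewrite S12 size_cat leq_addr.
- rewrite -(cat_take_drop i al) nmatch_cat S12 /step_match take_size_cat // drop_size_cat //.
  rewrite -(eq_count eqb_id) -(eq_count eqbF_neg).
  by apply: leq_add; apply: nmatch_le_count_fst; rewrite ?T1 ?T2 all_pred1_nseq ?orbT.
- rewrite -(cat_take_drop i al) nspace_cat S12 size_cat.
  have := dist_size_le_nspace (take i al); have := dist_size_le_nspace (drop i al).
  rewrite T1 T2 !size_nseq -/S1 -/S2; lia.
Qed.

Lemma nmatch_build_nil j t : nmatch (build j [::] t) = 0.
Proof. by elim: t => //= x t; rewrite nmatch_cons. Qed.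

Lemma nspace_build_nil j t : nspace (build j [::] t) = size t.
Proof. by elim: t => //= x t; rewrite nspace_cons => ->. Qed.

Lemma nmatch_build_ones s1 s2 j k t : j <= count negb s1 -> size s1 = j + k ->
  nmatch (build j (s1 ++ s2) (nseq k true ++ t)) = count id s1 + nmatch (build 0 s2 t).
Proof.
elim: s1 j k => [|c s1 IH] j k /=; first by case: j; case: k.
have := count_size negb s1.
case: c j => [] [|j] /= ? ? hs; last by rewrite nmatch_cons IH /=; lia.
all: case: k hs => [|k] /= hs; first lia.
all: by rewrite nmatch_cons IH /=; lia.
Qed.

Lemma nmatch_build_zeros s M : size s <= M ->
  nmatch (build 0 s (nseq M false)) = count negb s.
Proof.
elim: s M => [|c s IH] [|M] //= sM; first exact: nmatch_build_nil.
by rewrite andbF nmatch_cons IH //; case: c.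
Qed.

Lemma nspace_build s t j : j <= count negb s -> size s <= j + size t ->
  nspace (build j s t) = j + (size t - (size s - j)).
Proof.
elim: s t j => [|c s IH] t j.
  by rewrite leqn0 => /eqP-> _; rewrite nspace_build_nil /=; lia.
have := count_size negb s.
by case: c t j => [] [|x t] [|j] /= ? ? ?; try lia; rewrite nspace_cons IH /=; lia.
Qed.

Lemma nmatch_build_mirror X j : j <= size X ->
  nmatch (build j (mirror X) (nseq (size X) true ++ nseq (size X) false)) =
  count negb X + step_match X j.
Proof.
move=> jX; set N := size X.
have take_mirror : take (N + j) (mirror X) = rev (map negb X) ++ take j X.
  by rewrite take_cat size_rev size_map ltnNge leq_addr /= addKn.
(* the j zeros skipped by [build] all lie in the first N + j characters *)
rewrite -(cat_take_drop (N + j) (mirror X)) nmatch_build_ones; first last.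
- by rewrite size_takel ?size_mirror; lia.
- rewrite take_mirror count_cat count_rev count_map (eq_count negbK).
  have : count id (take j X) <= count id X.
    by rewrite -{2}(cat_take_drop j X) count_cat leq_addr.
  by have := count_id_negb (take j X); rewrite size_takel //; lia.
rewrite nmatch_build_zeros; last by rewrite size_drop size_mirror; lia.
have -> : count id (take (N + j) (mirror X)) + count negb (drop (N + j) (mirror X)) =
          step_match (mirror X) (N + j) by [].
by rewrite step_match_mirror; congr (_ + step_match _ _); lia.
Qed.

Lemma nspace_build_mirror X j : j <= size X ->
  nspace (build j (mirror X) (nseq (size X) true ++ nseq (size X) false)) = 2 * j.
Proof.
move=> jX; have count_mirror : count negb (mirror X) = size X.
  by rewrite count_cat count_rev count_map (eq_count negbK) count_id_negb.
by rewrite nspace_build ?size_mirror ?size_cat ?size_nseq ?count_mirror; lia.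
Qed.

Local Open Scope ring_scope.

Section StepScore.
Variables (R : realDomainType) (beta : R).
Hypothesis beta_ge0 : 0 <= beta.

Definition step_score (X : seq bool) (t : nat) : R :=
  (step_match X t)%:R - beta * (2 * t)%:R.

Lemma step_score_catr B X t : step_score (B ++ X) (size B + t) =
  (count id B)%:R - beta * (2 * size B)%:R + step_score X t.
Proof. by rewrite /step_score step_match_catr mulnDr !natrD; lra. Qed.

Lemma step_score_block_ends c d X t : (t <= c + d)%N ->
  let s := step_score ((nseq c false ++ nseq d true) ++ X) in
  s t <= s 0%N \/ s t <= s (c + d)%N.
Proof.
move=> tcd s.
have sm u : (u <= c + d)%N -> step_match ((nseq c false ++ nseq d true) ++ X) u =
    (`|u - c| + count negb X)%N.
  by move=> ucd; rewrite step_match_catl ?size_cat ?size_nseq // step_match_block.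
rewrite /s /step_score !sm ?leq_addr // !natrM !natrD mulr0 mulr0.
have t_ge0 : 0 <= t%:R :> R by [].
case: (leqP t c) => [tc | ct].
  left; have : (`|t - c| <= `|0 - c|)%N by lia.
  rewrite -(ler_nat R); have := mulr_ge0 beta_ge0 t_ge0; lra.
have -> : `|t - c|%N = (t - c)%N by lia.
have -> : `|c + d - c|%N = d by lia.
rewrite natrB ?(ltnW ct) //; have : t%:R <= c%:R + d%:R :> R by rewrite -natrD ler_nat.
have c_ge0 : 0 <= c%:R :> R by [].
case: (lerP (2 * beta) 1) => beta_le; [right | left; rewrite dist0n].
  have : 0 <= (1 - 2 * beta) * (c%:R + d%:R - t%:R) by apply: mulr_ge0; lra.
  lra.
have : 0 <= (2 * beta - 1) * t%:R by apply: mulr_ge0; lra.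
lra.
Qed.

Lemma step_score_blocks_max L t : all (fun p => p.1 <= p.2)%N L ->
  (t <= size (blocks L))%N ->
  exists2 i, (i <= size L)%N &
    step_score (blocks L) t <= step_score (blocks L) (2 * sumn (map snd (take i L))).
Proof.
elim: L t => [|[a b] L IH] t /=; first by move=> _; rewrite leqn0 => /eqP->; exists 0%N.
move=> /andP[/= ab L_le]; rewrite blocks_cons size_cat.
have size_block : size (block (a, b)) = (2 * b)%N.
  by rewrite size_cat !size_nseq /=; lia.
case: (leqP t (2 * b)) => [tb _ | bt tL].
  have tab : (t <= b - a + (b + a))%N by lia.
  have [le0 | le2b] := step_score_block_ends (blocks L) tab.
    by exists 0%N.
  exists 1%N => //; rewrite /= take0 /= addn0.
  by rewrite (_ : (2 * b = b - a + (b + a))%N) //; lia.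
have [i iL le_i] := IH (t - 2 * b)%N L_le ltac:(lia).
exists i.+1; first by [].
rewrite -(subnKC (ltnW bt)) /= mulnDr -size_block !step_score_catr.
by rewrite lerD2l size_block.
Qed.

End StepScore.

Lemma score_Gamma_rev (R : realType) (beta : R) fr i : all (fun p => p.1 <= p.2)%N fr ->
  let H := blocks (rev fr) in
  score 0 beta (Gamma fr (size fr - i)) =
  (count negb H)%:R + step_score beta H (2 * sumn (map snd (take i (rev fr)))).
Proof.
move=> fr_le H; rewrite /Gamma.
have -> : jidx fr (size fr - i) = (2 * sumn (map snd (take i (rev fr))))%N.
  by rewrite /jidx take_rev map_rev sumn_rev.
have jH : (2 * sumn (map snd (take i (rev fr))) <= size H)%N.
  rewrite /H size_blocks ?all_rev // -[rev fr in X in (_ <= X)%N](cat_take_drop i).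
  by rewrite map_cat sumn_cat; lia.
rewrite /score /Tseq Sseq_mirror half_nlen // nmatch_build_mirror //.
by rewrite nspace_build_mirror // /step_score natrD; lra.
Qed.

Lemma score_mirror_le (R : realType) (beta : R) X al : 0 <= beta ->
  is_alignment (mirror X) (nseq (size X) true ++ nseq (size X) false) al ->
  exists2 t, (t <= size X)%N &
    score 0 beta al <= (count negb X)%:R + step_score beta X t.
Proof.
move=> beta_ge0 /alignment_step_bound[p]; rewrite size_mirror => -[pX match_p space_p].
exists `|p - size X|%N; first lia.
rewrite /score /step_score mul0r subr0 addrA -natrD -step_match_mirror.
apply: lerB; first by rewrite ler_nat.
by apply: ler_wpM2l => //; rewrite ler_nat; lia.
Qed.

Theorem mainTheorem4 (R : realType) (q : nat) (fr : seq (nat * nat)) :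
  (2 <= q)%N ->
  (forall a b : nat, ((a, b) \in fr) =
     [&& (0 < a)%N, (0 < b)%N, (a <= b)%N, coprime a b & (2 <= a + b <= q)%N]) ->
  sorted frac_lt fr ->
  forall (al : seq column), is_alignment (Sseq fr) (Tseq fr) al ->
  forall beta : R, 0 <= beta ->
  exists r : nat, (r <= size fr)%N /\ score 0 beta al <= score 0 beta (Gamma fr r).
Proof.
move=> _ fr_mem _ al al_ST beta beta_ge0.
have fr_le : all (fun p => p.1 <= p.2)%N fr.
  by apply/allP => -[a b]; rewrite fr_mem => /and5P[].
have rfr_le : all (fun p => p.1 <= p.2)%N (rev fr) by rewrite all_rev.
rewrite /Tseq half_nlen // Sseq_mirror in al_ST.
have [t tH le_t] := score_mirror_le beta_ge0 al_ST.
have [i ifr le_i] := step_score_blocks_max beta_ge0 rfr_le tH.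
exists (size fr - i)%N; split; first exact: leq_subr.
by rewrite score_Gamma_rev // (le_trans le_t) // lerD2l.
Qed.
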